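(* Let $(P,H,\phi)$ be a host-parasite triple and let $\mathcal R(P,H,\phi)$ be the set of all reconciliation maps for it. For all $\psi,\psi'\in\mathcal R(P,H,\phi)$ we have $d_{edit}(\psi,\psi')=d_{path}(\psi,\psi')$, where $$d_{path}(\psi,\psi')=\sum_{v\in V(P)} d_H(\psi(v),\psi'(v)).$$ In particular, since $d_{path}$ is a metric on $\mathcal R(P,H,\phi)$, so is $d_{edit}$.
   Context: A phylogenetic tree $T$ is a finite rooted tree with root $\rho_T$ (indegree $0$, outdegree $2$), in which every vertex other than the root and the leaves has indegree $1$ and outdegree $2$; $V(T)$ is its vertex set, $L(T)$ its leaf set, $V^o(T)=V(T)-L(T)$. For $v\in V^o(T)$, $Ch(v)$ is the set of children of $v$; for $v\ne\rho_T$, $par(v)$ is its parent. $x\succeq_T y$ means $x$ lies on the path from $\rho_T$ to $y$ (i.e. $x$ is an ancestor of $y$ or $x=y$); $x\succ_T y$ means $x\succeq_T y$ and $x\neq y$. For $L\subseteq L(T)$ with $|L|\ge 2$, $lca_T(L)$ is the lowest vertex above every element of $L$; if $L=\{x\}$ then $lca_T(L)=x$. $d_T(v,w)$ is the number of edges on the (undirected) path in $T$ between $v$ and $w$. A host-parasite triple $(P,H,\phi)$ consists of two phylogenetic trees $P,H$ and a map $\phi:L(P)\to L(H)$. A reconciliation map is a map $\psi:V(P)\to V(H)$ such that (i) $\psi$ restricted to $L(P)$ equals $\phi$, and (ii) for every $v\in V^o(P)$ and every child $v'$ of $v$, $\psi(v)\succeq_H\psi(v')$. For $v\in V(P)$ let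 $m(v)=lca_H(\{\phi(x): x\in L(P),\ v\succeq_P x\})$ and $A(v)=\{w\in V(H): \rho_H\succeq_H w\succeq_H m(v)\}$. Up operation: given $\psi\in\mathcal R(P,H,\phi)$ and $w\in V(P)$ with $\psi(w)\notin\{\rho_H,\psi(par(w))\}$ (the second condition being vacuous if $w=\rho_P$), $\psi^{up}_w$ is the map with $\psi^{up}_w(w)=par(\psi(w))$ and $\psi^{up}_w(v)=\psi(v)$ for $v\neq w$. Down operation: given $\psi\in\mathcal R(P,H,\phi)$ and $w\in V^o(P)$ with $\psi(w)\succ_H m(w)$ and $\psi(w)\ne\psi(v')$ for all $v'\in Ch(w)$, $\psi^{down}_w$ is the map with $\psi^{down}_w(w)$ the unique vertex of $A(w)\cap Ch(\psi(w))$ and $\psi^{down}_w(v)=\psi(v)$ for $v\ne w$. The edit-distance $d_{edit}(\psi,\psi')$ is the smallest number of up/down operations needed to transform $\psi$ into $\psi'$. *)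

(* Rooted trees are given on a finite vertex type V by a
   child relation [ch : rel V] (ch x y <-> y is a child of x) and a root. *)
From mathcomp Require Import all_boot.
Set Implicit Arguments. Unset Strict Implicit. Unset Printing Implicit Defensive.

Section Phylo.
Variable V : finType.
Variable ch : rel V.
Variable r : V.

Definition is_phylo : Prop :=
  [/\ forall x, ~~ ch x r,
      forall v, v != r -> #|[pred p | ch p v]| = 1,
      forall v, connect ch r v,
      #|[pred c | ch r c]| = 2 &
      forall v, #|[pred c | ch v c]| = 0 \/ #|[pred c | ch v c]| = 2].

Definition is_leaf (v : V) : bool := #|[pred c | ch v c]| == 0.

Definition anc (x y : V) : bool := connect ch x y.

(* lowest common ancestor of a (nonempty) set L; default r if none *)
Definition is_lca (L : {set V}) (w : V) : bool :=
  [forall x in L, anc w x] &&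
  [forall w', [forall x in L, anc w' x] ==> anc w' w].

Definition lca (L : {set V}) : V := odflt r [pick w | is_lca L w].

Definition usym (a b : V) : bool := ch a b || ch b a.

Definition dist (x y : V) : nat :=
  find (fun n => [exists t : n.-tuple V, path usym x t && (last x t == y)])
       (iota 0 #|V|).
End Phylo.

Section Reconc.
Variables VP VH : finType.
Variables (chP : rel VP) (rP : VP) (chH : rel VH) (rH : VH).
Variable phi : VP -> VH.   (* only its values on L(P) matter *)

Definition is_reconc (psi : VP -> VH) : Prop :=
  (forall x, is_leaf chP x -> psi x = phi x) /\
  (forall v v', chP v v' -> anc chH (psi v) (psi v')).

Definition mlca (v : VP) : VH :=
  lca chH rH [set phi x | x in [pred x | is_leaf chP x && anc chP v x]].

Definition Aset (v : VP) : pred VH := fun w => anc chH w (mlca v).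

Definition up_op (psi psi' : VP -> VH) (w : VP) : Prop :=
  is_reconc psi /\ psi w != rH /\
  (forall pw, chP pw w -> psi w != psi pw) /\
  exists p, [/\ chH p (psi w), psi' w = p & forall v, v != w -> psi' v = psi v].

Definition down_op (psi psi' : VP -> VH) (w : VP) : Prop :=
  is_reconc psi /\ ~~ is_leaf chP w /\
  (psi w != mlca w /\ anc chH (psi w) (mlca w)) /\
  (forall v', chP w v' -> psi w != psi v') /\
  exists c, [/\ chH (psi w) c, Aset w c, psi' w = c &
                forall v, v != w -> psi' v = psi v].

Definition edit_step (psi psi' : VP -> VH) : Prop :=
  exists w, up_op psi psi' w \/ down_op psi psi' w.

Fixpoint edit_reach (n : nat) (psi psi' : VP -> VH) : Prop :=
  match n with
  | 0 => psi =1 psi'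
  | k.+1 => exists psi1, edit_step psi psi1 /\ edit_reach k psi1 psi'
  end.

Definition is_edit_dist (psi psi' : VP -> VH) (k : nat) : Prop :=
  edit_reach k psi psi' /\ forall n, edit_reach n psi psi' -> k <= n.

Definition d_path (psi psi' : VP -> VH) : nat :=
  \sum_(v : VP) dist chH (psi v) (psi' v).
End Reconc.

From mathcomp Require Import all_boot zify.
Set Implicit Arguments. Unset Strict Implicit. Unset Printing Implicit Defensive.

(* For every reconciliation map psi and vertex v, psi(v) lies on the path from
   the root of H to m(v); hence any two values psi(v), psi'(v) are comparable
   and their distance is their depth difference, which makes d_path a metric.
   An up or down operation moves a single psi(w) by one edge, so it changes
   d_path by at most one.  Conversely, if psi <> psi', either psi'(v) lies
   strictly above psi(v) for some v, and for such a w of least depth in P the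
   parent of w is not mapped to psi(w), so moving psi(w) up is legal; or
   psi(v) lies strictly above psi'(v) wherever they differ, and for such a w of
   greatest depth no child of w is mapped to psi(w), so moving psi(w) one step
   towards psi'(w) is a legal down operation.  Either way d_path drops by one. *)

Section PhyloTree.
Variables (V : finType) (ch : rel V) (r : V).
Hypothesis T : is_phylo ch r.

Lemma phylo_root_no_parent x : ~~ ch x r.
Proof. by case: T. Qed.

Lemma phylo_parent_uniq p q v : ch p v -> ch q v -> p = q.
Proof.
move=> hp hq; case: T => root_orphan one_parent _ _ _.
have vr : v != r by apply: contraTneq hp => ->; apply: root_orphan.
have [x hx] := mem_card1 (one_parent v vr).
by move: (hx p) (hx q); rewrite !inE hp hq => /esym/eqP -> /esym/eqP.
Qed.

Lemma phylo_parent_exists v : v != r -> exists p, ch p v.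
Proof.
move=> vr; case: T => _ one_parent _ _ _.
have [x hx] := mem_card1 (one_parent v vr).
by exists x; move: (hx x); rewrite !inE eqxx.
Qed.

Lemma anc_root v : anc ch r v.
Proof. by case: T. Qed.

Lemma anc_of_child p c u : ch p c -> anc ch u c -> u = c \/ anc ch u p.
Proof.
move=> hpc /connectP [s]; case/lastP: s => [_ -> | s q]; first by left.
rewrite rcons_path last_rcons => /andP [hs hq] eq_qc; subst q; right.
by rewrite (phylo_parent_uniq hpc hq); apply/connectP; exists s.
Qed.

Lemma anc_rootE x : anc ch x r -> x = r.
Proof.
move=> /connectP [s]; case/lastP: s => [// | s q].
rewrite rcons_path last_rcons => /andP [_ hq] eq_qr; subst q.
by move: (phylo_root_no_parent (last x s)); rewrite hq.
Qed.

Lemma anc_neq_child a b : anc ch a b -> a != b -> exists2 c, ch a c & anc ch c b.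
Proof.
move=> /connectP [[|c s] /= hs ->]; first by rewrite eqxx.
by case/andP: hs => hac hs _; exists c => //; apply/connectP; exists s.
Qed.

Lemma child_not_anc x c : ch x c -> ~~ anc ch c x.
Proof.
have /connectP [s] := anc_root x.
elim/last_ind: s x c => [|s q IH] x c /=.
  move=> _ -> hrc; apply/negP => /anc_rootE eq_cr.
  by move: hrc; rewrite eq_cr (negbTE (phylo_root_no_parent r)).
rewrite rcons_path last_rcons => /andP [hs hq] eq_qx; subst q.
move=> hxc; apply/negP => hcx; case: (anc_of_child hq hcx) => [eq_cx | hcp].
  subst c; move/negP: (IH _ _ hs erefl hq); apply.
  by rewrite (phylo_parent_uniq hq hxc); exact: connect0.
by move/negP: (IH _ _ hs erefl hq); apply; exact: connect_trans (connect1 hxc) hcp.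
Qed.

Lemma anc_antisym x y : anc ch x y -> anc ch y x -> x = y.
Proof.
move=> hxy hyx; apply/eqP; apply/negPn/negP => /(anc_neq_child hxy) [c hxc hcy].
by move/negP: (child_not_anc hxc); apply; exact: connect_trans hcy hyx.
Qed.

Lemma anc_comparable a b x : anc ch a x -> anc ch b x -> anc ch a b \/ anc ch b a.
Proof.
move=> hax /connectP [s]; elim/last_ind: s x hax => [|s q IH] x hax /=.
  by move=> _ /= eq_xb; subst x; left.
rewrite rcons_path last_rcons => /andP [hs hq] eq_qx; subst q.
case: (anc_of_child hq hax) => [eq_ax | hap]; last exact: IH hap hs erefl.
subst a; right; apply/connectP; exists (rcons s x) => //.
  by rewrite rcons_path hs hq.
by rewrite last_rcons.
Qed.

Definition depth v := #|[pred u | anc ch u v]|.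

Lemma depth_le a b : anc ch a b -> depth a <= depth b.
Proof.
by move=> hab; apply/subset_leq_card/subsetP => u; rewrite !inE => /connect_trans; apply.
Qed.

Lemma depth_lt a b : anc ch a b -> a != b -> depth a < depth b.
Proof.
move=> hab ne; apply/proper_card/properP; split.
  by apply/subsetP => u; rewrite !inE => /connect_trans; apply.
exists b; first by rewrite inE; exact: connect0.
rewrite inE; apply/negP => hba.
by move: ne; rewrite (anc_antisym hab hba) eqxx.
Qed.

Lemma anc_depth_eq a b : anc ch a b -> depth a = depth b -> a = b.
Proof.
move=> hab eq_d; apply/eqP; apply/negPn/negP => /(depth_lt hab).
by rewrite eq_d ltnn.
Qed.

Lemma depth_child p c : ch p c -> depth c = (depth p).+1.
Proof.
move=> hpc; rewrite /depth /anc (cardD1 c) !inE connect0; congr S.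
apply: eq_card => u; rewrite !inE; apply/andP/idP => [[ne huc] | hup].
  by case: (anc_of_child hpc huc) => // eq_uc; rewrite eq_uc eqxx in ne.
split; last exact: connect_trans hup (connect1 hpc).
by apply: contraTneq hup => ->; apply: child_not_anc.
Qed.

Lemma depth_gt0 v : 0 < depth v.
Proof. by apply/card_gt0P; exists v; rewrite inE /anc connect0. Qed.

Lemma exists_leaf_below v : exists2 x, is_leaf ch x & anc ch v x.
Proof.
have [x hvx hmax] := arg_maxnP depth (connect0 ch v).
exists x => //; apply/eqP/eq_card0 => c; rewrite inE; apply/negP => hxc.
by move: (hmax c (connect_trans hvx (connect1 hxc))); rewrite /= (depth_child hxc) ltnn.
Qed.

Lemma lca_is_lca (L : {set V}) : L != set0 -> is_lca ch L (lca ch r L).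
Proof.
move=> /set0Pn [x0 hx0].
pose below_all w := [forall x in L, anc ch w x].
have root_below : below_all r by apply/forall_inP => x _; apply: anc_root.
suff [w hw] : exists w, is_lca ch L w.
  by rewrite /lca; case: pickP => [y hy | /(_ w)] //=; rewrite hw.
have [w hw hmax] := arg_maxnP depth root_below.
exists w; apply/andP; split=> //; apply/forallP => w'; apply/implyP => hw'.
have [// | hw'w] := anc_comparable (forall_inP hw' x0 hx0) (forall_inP hw x0 hx0).
have [-> | ne] := eqVneq w w'; first exact: connect0.
by move: (hmax w' hw'); rewrite /= leqNgt (depth_lt hw'w ne).
Qed.

Definition walk n x y :=
  exists s : seq V, [/\ size s = n, path (usym ch) x s & last x s = y].

Lemma walkP n x y :
  reflect (walk n x y) [exists t : n.-tuple V, path (usym ch) x t && (last x t == y)].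
Proof.
apply: (iffP existsP) => [[t /andP [ht /eqP <-]] | [s [hs ht hl]]].
  by exists t; rewrite size_tuple.
have /eqP size_s := hs; by exists (Tuple size_s); rewrite /= ht hl eqxx.
Qed.

Lemma walk_rev n x y : walk n x y -> walk n y x.
Proof.
case=> s [hs ht <-]; exists (rev (belast x s)); split.
- by rewrite size_rev size_belast.
- by rewrite rev_path; apply: sub_path ht => a b; rewrite /usym orbC.
- by rewrite -(last_cons x) -rev_rcons -lastI rev_cons last_rcons.
Qed.

(* [dist] only searches walk lengths below [#|V|]. *)
Lemma dist_le n x y : walk n x y -> n < #|V| -> dist ch x y <= n.
Proof.
move=> /walkP hw hn; rewrite /dist leqNgt; apply/negP => /(before_find 0).
by rewrite nth_iota // add0n hw.
Qed.

Lemma dist_walk x y : dist ch x y < #|V| -> walk (dist ch x y) x y.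
Proof.
rewrite /dist; set P := fun n => _ => hlt.
have hhas : has P (iota 0 #|V|) by rewrite has_find size_iota.
by move: (nth_find 0 hhas); rewrite nth_iota // add0n => /walkP.
Qed.

Lemma walk_depth n x y : walk n x y -> depth y <= depth x + n /\ depth x <= depth y + n.
Proof.
case=> s [<- hs <-]; elim: s x hs => [|z s IH] x /=; first by rewrite !addn0.
case/andP => /orP hxz /IH [IH1 IH2].
by case: hxz => /depth_child e; rewrite e in IH1 IH2 *; lia.
Qed.

Lemma depth_last a s : path ch a s -> depth (last a s) = depth a + size s.
Proof.
elim: s a => [|c s IH] a /=; first by rewrite addn0.
by case/andP => /depth_child e /IH ->; rewrite e addSnnS.
Qed.

Lemma anc_walk a b : anc ch a b -> walk (depth b - depth a) a b.
Proof.
move=> /connectP [s hs ->]; exists s; split=> //.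
- by rewrite depth_last // addKn.
- by apply: sub_path hs => u w huw; rewrite /usym huw.
Qed.

Lemma dist_walk_depth n x y :
  walk n x y -> n < #|V| -> n <= (depth x - depth y) + (depth y - depth x) ->
  dist ch x y = n.
Proof.
move=> hw hlt hn; have hle := dist_le hw hlt.
have [h1 h2] := walk_depth (dist_walk (leq_ltn_trans hle hlt)); lia.
Qed.

Lemma dist_anc a b :
  anc ch a b -> dist ch a b = depth b - depth a /\ dist ch b a = depth b - depth a.
Proof.
move=> hab; have hw := anc_walk hab; have ha := depth_gt0 a.
have hb : depth b <= #|V| := max_card _.
have hlt : depth b - depth a < #|V|.
  by apply: leq_trans hb; rewrite ltn_subrL ha depth_gt0.
split; [apply: dist_walk_depth hw hlt _ | apply: dist_walk_depth (walk_rev hw) hlt _]; lia.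
Qed.

Lemma dist_comparable a b :
  anc ch a b \/ anc ch b a -> dist ch a b = (depth a - depth b) + (depth b - depth a).
Proof.
case=> h; have [d_ab d_ba] := dist_anc h; have := depth_le h.
  by rewrite d_ab; lia.
by rewrite d_ba; lia.
Qed.

Lemma dist_common_desc a b x :
  anc ch a x -> anc ch b x -> dist ch a b = (depth a - depth b) + (depth b - depth a).
Proof. by move=> hax hbx; apply/dist_comparable/(anc_comparable hax hbx). Qed.

Lemma dist_refl x : dist ch x x = 0.
Proof. by rewrite (@dist_comparable x x) ?subnn //; left; apply: connect0. Qed.

Lemma dist_eq0 a b x : anc ch a x -> anc ch b x -> dist ch a b = 0 -> a = b.
Proof.
move=> hax hbx; rewrite (dist_common_desc hax hbx) => gap0.
case: (anc_comparable hax hbx) => h; last apply/esym; apply: anc_depth_eq h _; lia.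
Qed.

End PhyloTree.

Section Reconciliation.
Variables (VP VH : finType) (chP : rel VP) (rP : VP) (chH : rel VH) (rH : VH).
Variable phi : VP -> VH.
Hypotheses (TP : is_phylo chP rP) (TH : is_phylo chH rH).

Local Notation reconc := (is_reconc chP chH phi).
Local Notation m := (mlca chP chH rH phi).

Lemma mlca_is_lca v :
  is_lca chH [set phi x | x in [pred x | is_leaf chP x && anc chP v x]] (m v).
Proof.
apply: (lca_is_lca TH); apply/set0Pn; have [x hx hvx] := exists_leaf_below TP v.
by exists (phi x); apply/imsetP; exists x; rewrite ?inE ?hx.
Qed.

Lemma reconc_anc psi v x : reconc psi -> anc chP v x -> anc chH (psi v) (psi x).
Proof.
case=> _ hedge /connectP [s hs ->]; elim: s v hs => [|y s IH] v /=.
  by move=> _; apply: connect0.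
by case/andP => /hedge hvy /IH; apply: connect_trans.
Qed.

Lemma reconc_anc_mlca psi v : reconc psi -> anc chH (psi v) (m v).
Proof.
move=> hpsi; have /andP [_ /forallP lowest] := mlca_is_lca v.
apply: (implyP (lowest (psi v))); apply/forall_inP => y /imsetP [x].
rewrite inE => /andP [hx hvx] ->; rewrite -(proj1 hpsi x hx).
exact: reconc_anc hpsi hvx.
Qed.

Lemma mlca_child w v : chP w v -> anc chH (m w) (m v).
Proof.
move=> hwv; have /andP [_ /forallP lowest] := mlca_is_lca v.
have /andP [above _] := mlca_is_lca w.
apply: (implyP (lowest _)); apply/forall_inP => y /imsetP [x].
rewrite inE => /andP [hx hvx] ->; apply: (forall_inP above).
by apply/imsetP; exists x; rewrite // inE hx; apply: connect_trans (connect1 hwv) hvx.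
Qed.

Lemma dist_reconc psi psi' v : reconc psi -> reconc psi' ->
  dist chH (psi v) (psi' v) =
  (depth chH (psi v) - depth chH (psi' v)) + (depth chH (psi' v) - depth chH (psi v)).
Proof.
move=> hpsi hpsi'.
exact: (dist_common_desc TH) (reconc_anc_mlca v hpsi) (reconc_anc_mlca v hpsi').
Qed.

Lemma d_path_update (psi psi2 psi' : VP -> VH) w : (forall v, v != w -> psi2 v = psi v) ->
  d_path chH psi2 psi' + dist chH (psi w) (psi' w) =
  d_path chH psi psi' + dist chH (psi2 w) (psi' w).
Proof.
move=> same; rewrite /d_path (bigD1 w) //= [in RHS](bigD1 w) //=.
by rewrite (eq_bigr (fun v => dist chH (psi v) (psi' v))) => [|v /same ->]; lia.
Qed.

Lemma d_path_eq0 psi psi' :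
  reconc psi -> reconc psi' -> d_path chH psi psi' = 0 <-> psi =1 psi'.
Proof.
move=> hpsi hpsi'; split => [/eqP | same].
  rewrite sum_nat_eq0 => /forallP zero v.
  exact: (dist_eq0 TH) (reconc_anc_mlca v hpsi) (reconc_anc_mlca v hpsi') (eqP (zero v)).
by apply: big1 => v _; rewrite same (dist_refl TH).
Qed.

Lemma d_path_sym psi psi' :
  reconc psi -> reconc psi' -> d_path chH psi psi' = d_path chH psi' psi.
Proof. by move=> hpsi hpsi'; apply: eq_bigr => v _; rewrite !dist_reconc //; lia. Qed.

Lemma d_path_triangle psi1 psi2 psi3 :
  reconc psi1 -> reconc psi2 -> reconc psi3 ->
  d_path chH psi1 psi3 <= d_path chH psi1 psi2 + d_path chH psi2 psi3.
Proof.
move=> h1 h2 h3; rewrite /d_path -big_split /=; apply: leq_sum => v _.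
by rewrite !dist_reconc //; lia.
Qed.

Lemma edit_step_d_path psi psi1 psi' : reconc psi' -> edit_step chP chH rH phi psi psi1 ->
  d_path chH psi psi' <= d_path chH psi1 psi' + 1.
Proof.
move=> hpsi' [w hop].
have [x [hpsi hxm psi1_w same adj]] : exists x,
    [/\ reconc psi, anc chH x (m w), psi1 w = x, forall v, v != w -> psi1 v = psi v &
        chH x (psi w) || chH (psi w) x].
  case: hop => [[hpsi [_ [_ [p [hp e same]]]]] | [hpsi [_ [_ [_ [c [hc hcm e same]]]]]]].
    exists p; split; rewrite ?hp //.
    exact: connect_trans (connect1 hp) (reconc_anc_mlca w hpsi).
  by exists c; split; rewrite ?hc ?orbT.
have := d_path_update psi' same; rewrite psi1_w.
rewrite (dist_common_desc TH hxm (reconc_anc_mlca w hpsi')) dist_reconc //.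
by case/orP: adj => /(depth_child TH) ->; lia.
Qed.

Lemma edit_reach_d_path n psi psi' :
  reconc psi' -> edit_reach chP chH rH phi n psi psi' -> d_path chH psi psi' <= n.
Proof.
move=> hpsi'; elim: n psi => [|n IH] psi /=.
  by move=> same; rewrite leqn0; apply/eqP/big1 => v _; rewrite same (dist_refl TH).
case=> psi1 [hstep /IH]; have := edit_step_d_path hpsi' hstep; lia.
Qed.

Definition needs_up (psi psi' : VP -> VH) v :=
  (psi v != psi' v) && anc chH (psi' v) (psi v).

Definition needs_down (psi psi' : VP -> VH) v :=
  (psi v != psi' v) && anc chH (psi v) (psi' v).

Lemma needs_up_or_down psi psi' v : reconc psi -> reconc psi' -> psi v != psi' v ->
  needs_up psi psi' v || needs_down psi psi' v.
Proof.
move=> hpsi hpsi' ne; rewrite /needs_up /needs_down ne /=.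
by case: (anc_comparable TH (reconc_anc_mlca v hpsi') (reconc_anc_mlca v hpsi)) => h;
  rewrite h ?orbT.
Qed.

Lemma differ_not_leaf psi psi' v :
  reconc psi -> reconc psi' -> psi v != psi' v -> ~~ is_leaf chP v.
Proof.
move=> [leaves _] [leaves' _]; apply: contra => hv.
by rewrite leaves // leaves'.
Qed.

(* Unlike [down_op], [up_op] does not exclude the leaves of P. *)
Lemma up_op_reconc psi psi2 w :
  ~~ is_leaf chP w -> up_op chP chH rH phi psi psi2 w -> reconc psi2.
Proof.
move=> hw [[leaves edges] [_ [not_par [p [hp e same]]]]]; split.
  by move=> x hx; rewrite same ?leaves //; apply: contraNneq hw => <-.
move=> v v' hvv'; have [ev | nv] := eqVneq v w; have [ev' | nv'] := eqVneq v' w.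
- by rewrite ev ev' e; apply: connect0.
- rewrite ev e same //; rewrite ev in hvv'.
  exact: connect_trans (connect1 hp) (edges _ _ hvv').
- rewrite ev' e same //; rewrite ev' in hvv'.
  case: (anc_of_child TH hp (edges _ _ hvv')) => // eq_vw.
  by move: (not_par _ hvv'); rewrite eq_vw eqxx.
- by rewrite !same //; apply: edges.
Qed.

Lemma down_op_reconc psi psi2 w : down_op chP chH rH phi psi psi2 w -> reconc psi2.
Proof.
move=> [[leaves edges] [hw [_ [not_child [c [hc hcm e same]]]]]]; split.
  by move=> x hx; rewrite same ?leaves //; apply: contraNneq hw => <-.
move=> v v' hvv'; have [ev | nv] := eqVneq v w; have [ev' | nv'] := eqVneq v' w.
- by rewrite ev ev' e; apply: connect0.
- rewrite ev e same //; rewrite ev in hvv'.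
  have hv'm := reconc_anc_mlca v' (conj leaves edges).
  case: (anc_comparable TH (connect_trans hcm (mlca_child hvv')) hv'm) => // hv'c.
  case: (anc_of_child TH hc hv'c) => [-> | hv'w]; first exact: connect0.
  by move: (not_child _ hvv'); rewrite (anc_antisym TH (edges _ _ hvv') hv'w) eqxx.
- rewrite ev' e same //; rewrite ev' in hvv'.
  exact: connect_trans (edges _ _ hvv') (connect1 hc).
- by rewrite !same //; apply: edges.
Qed.

Lemma up_step psi psi' w : reconc psi -> reconc psi' -> needs_up psi psi' w ->
  (forall pw, chP pw w -> ~~ needs_up psi psi' pw) ->
  exists psi2, [/\ up_op chP chH rH phi psi psi2 w, reconc psi2 &
                   d_path chH psi2 psi' + 1 = d_path chH psi psi'].
Proof.
move=> hpsi hpsi' /andP [ne above] par_ok; have hw := differ_not_leaf hpsi hpsi' ne.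
have wr : psi w != rH.
  by apply: contraNneq ne => eq_r; move: above; rewrite eq_r => /(anc_rootE TH) ->.
have [p hp] := phylo_parent_exists TH wr.
have not_par pw : chP pw w -> psi w != psi pw.
  move=> hpw; apply: contra (par_ok pw hpw) => /eqP eq_par.
  have hpar : anc chH (psi' pw) (psi w) := connect_trans (proj2 hpsi' _ _ hpw) above.
  rewrite /needs_up -eq_par hpar andbT.
  apply: contraNneq ne => eq_par'.
  by apply/eqP/esym/(anc_antisym TH above); rewrite eq_par'; apply: (proj2 hpsi') hpw.
pose psi2 := [eta psi with w |-> p].
have same v : v != w -> psi2 v = psi v by move=> /negbTE /= ->.
have hop : up_op chP chH rH phi psi psi2 w.
  by do 3!split=> //; exists p; split=> //=; rewrite eqxx.
exists psi2; split=> //; first exact: up_op_reconc hw hop.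
have hp' : anc chH (psi' w) p.
  by case: (anc_of_child TH hp above) => // eq_w; rewrite eq_w eqxx in ne.
have := depth_le hp'; have := d_path_update psi' same.
rewrite /= eqxx dist_reconc // (dist_comparable TH (or_intror hp')) (depth_child TH hp).
lia.
Qed.

Lemma down_step psi psi' w : reconc psi -> reconc psi' -> needs_down psi psi' w ->
  (forall v, chP w v -> ~~ needs_down psi psi' v) ->
  exists psi2, [/\ down_op chP chH rH phi psi psi2 w, reconc psi2 &
                   d_path chH psi2 psi' + 1 = d_path chH psi psi'].
Proof.
move=> hpsi hpsi' /andP [ne below] child_ok; have hw := differ_not_leaf hpsi hpsi' ne.
have not_child v : chP w v -> psi w != psi v.
  move=> hwv; apply: contra (child_ok v hwv) => /eqP eq_ch.
  have hch : anc chH (psi w) (psi' v) := connect_trans below (proj2 hpsi' _ _ hwv).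
  rewrite /needs_down -eq_ch hch andbT.
  apply: contraNneq ne => eq_ch'.
  by apply/eqP/(anc_antisym TH below); rewrite eq_ch'; apply: (proj2 hpsi') hwv.
have [c hc hcw] := anc_neq_child below ne.
have hwm' := reconc_anc_mlca w hpsi'.
have not_m : psi w != m w.
  by apply: contraNneq ne => eq_m; apply/eqP/(anc_antisym TH below); rewrite eq_m.
pose psi2 := [eta psi with w |-> c].
have same v : v != w -> psi2 v = psi v by move=> /negbTE /= ->.
have hop : down_op chP chH rH phi psi psi2 w.
  do 2!split=> //; split; first by split=> //; apply: reconc_anc_mlca.
  split=> //; exists c; split=> //=; rewrite ?eqxx //.
  exact: connect_trans hcw hwm'.
exists psi2; split=> //; first exact: down_op_reconc hop.
have := depth_le hcw; have := d_path_update psi' same.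
rewrite /= eqxx dist_reconc // (dist_comparable TH (or_introl hcw)) (depth_child TH hc).
lia.
Qed.

Lemma edit_step_closer psi psi' : reconc psi -> reconc psi' -> ~ psi =1 psi' ->
  exists psi2, [/\ edit_step chP chH rH phi psi psi2, reconc psi2 &
                   d_path chH psi2 psi' + 1 = d_path chH psi psi'].
Proof.
move=> hpsi hpsi' differ.
have [v ne] : exists v, psi v != psi' v.
  case: (pickP (fun v => psi v != psi' v)) => [v ne | same]; first by exists v.
  by exfalso; apply: differ => v; apply/eqP/negbFE/same.
case: (boolP [exists v, needs_up psi psi' v]) => [/existsP [u hu] | no_up].
- have [w hw wmin] := arg_minnP (depth chP) hu.
  have par_ok pw : chP pw w -> ~~ needs_up psi psi' pw.
    by move=> hpw; apply/negP => /wmin; rewrite /= (depth_child TP hpw) ltnn.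
  have [psi2 [hop ? ?]] := up_step hpsi hpsi' hw par_ok.
  by exists psi2; split=> //; exists w; left.
have hv : needs_down psi psi' v.
  have not_up : ~~ needs_up psi psi' v.
    by apply: contra no_up => hu; apply/existsP; exists v.
  by move: (needs_up_or_down hpsi hpsi' ne); rewrite (negbTE not_up).
have [w hw wmax] := arg_maxnP (depth chP) hv.
have child_ok v' : chP w v' -> ~~ needs_down psi psi' v'.
  by move=> hwv; apply/negP => /wmax; rewrite /= (depth_child TP hwv) ltnn.
have [psi2 [hop ? ?]] := down_step hpsi hpsi' hw child_ok.
by exists psi2; split=> //; exists w; right.
Qed.

Lemma d_path_edit_reach psi psi' : reconc psi -> reconc psi' ->
  edit_reach chP chH rH phi (d_path chH psi psi') psi psi'.
Proof.
move=> hpsi hpsi'; move hn: (d_path chH psi psi') => n.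
elim: n psi hpsi hn => [|n IH] psi hpsi hn /=.
  exact/(d_path_eq0 hpsi hpsi').
have differ : ~ psi =1 psi' by move/(d_path_eq0 hpsi hpsi'); rewrite hn.
have [psi2 [hstep hpsi2 closer]] := edit_step_closer hpsi hpsi' differ.
by exists psi2; split=> //; apply: IH => //; lia.
Qed.

End Reconciliation.

Theorem mainTheorem1 (VP VH : finType) (chP : rel VP) (rP : VP)
  (chH : rel VH) (rH : VH) (phi : VP -> VH) :
  is_phylo chP rP -> is_phylo chH rH ->
  (forall psi psi', is_reconc chP chH phi psi -> is_reconc chP chH phi psi' ->
     is_edit_dist chP chH rH phi psi psi' (d_path chH psi psi')) /\
  (* d_path (hence d_edit) is a metric on R(P,H,phi) *)
  (forall psi psi', is_reconc chP chH phi psi -> is_reconc chP chH phi psi' ->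
     (d_path chH psi psi' = 0 <-> psi =1 psi') /\
     d_path chH psi psi' = d_path chH psi' psi) /\
  (forall psi1 psi2 psi3, is_reconc chP chH phi psi1 ->
     is_reconc chP chH phi psi2 -> is_reconc chP chH phi psi3 ->
     d_path chH psi1 psi3 <= d_path chH psi1 psi2 + d_path chH psi2 psi3).
Proof.
move=> TP TH; split; [|split].
- move=> psi psi' hpsi hpsi'; split; first exact: (d_path_edit_reach TP TH hpsi hpsi').
  by move=> n; apply: (edit_reach_d_path TP TH hpsi').
- move=> psi psi' hpsi hpsi'.
  by split; [exact: (d_path_eq0 TP TH hpsi hpsi') | exact: (d_path_sym TP TH hpsi hpsi')].
- by move=> psi1 psi2 psi3; apply: (d_path_triangle TP TH).
Qed.
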